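(* For every set $X$, $\mathrm{Aut}(\overline{\mathcal{PI}^{\ast}}_X)\cong\mathcal{S}_X$, the symmetric group on $X$.
   Context: Let $X'=\{x':x\in X\}$ be a disjoint copy of $X$. $\overline{\mathcal{PI}^{\ast}}_X$ is the set of partitions of $X\cup X'$ each of whose blocks is a singleton (point) or a generalised line (a set meeting both $X$ and $X'$), with product $\circ$: $\alpha\circ\beta$ has as generalised lines exactly the sets $A\cup D'$ such that $A\cup B'$ is a generalised line of $\alpha$ and $B\cup D'$ is a generalised line of $\beta$ (same $B\subseteq X$), all other elements being points. $\mathrm{Aut}$ denotes the automorphism group. *)

(* The partition monoid PI*_X of the paper.
   X' is modelled by the right summand of X + X: x is [inl x], x' is [inr x]. *)

(* A partition of X ∪ X' is given by its equivalence relation ("same block").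
   Every block is a singleton (point) or meets both X and X' (generalised line). *)
Record PI (X : Type) := mkPI {
  prel : X + X -> X + X -> Prop;
  prel_refl : forall u, prel u u;
  prel_sym : forall u v, prel u v -> prel v u;
  prel_trans : forall u v w, prel u v -> prel v w -> prel u w;
  prel_block : forall u v, prel u v -> u <> v ->
      (exists x, prel u (inl x)) /\ (exists y, prel u (inr y))
}.
Arguments prel {X} _ _ _.

Section Product.
Variables (X : Type) (a b : PI X).

(* The alpha-block of p' is a generalised line A ∪ B', the beta-block of q is a
   generalised line B ∪ D', with the same B. *)
Definition plink (p q : X) : Prop :=
  (forall y, prel a (inr p) (inr y) <-> prel b (inl q) (inl y)) /\
  (exists x, prel a (inr p) (inl x)) /\
  (exists d, prel b (inl q) (inr d)).

(* membership in A ∪ D' *)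
Definition pin (p q : X) (u : X + X) : Prop :=
  match u with
  | inl x => prel a (inr p) (inl x)
  | inr d => prel b (inl q) (inr d)
  end.

Definition prod_rel (u v : X + X) : Prop :=
  u = v \/ exists p q, plink p q /\ pin p q u /\ pin p q v.

Lemma pin_transfer p q p' q' v :
  plink p q -> plink p' q' -> pin p q v -> pin p' q' v ->
  forall w, pin p' q' w -> pin p q w.
Proof.
  intros [L1 _] [L2 _] H1 H2.
  assert (Hb : prel a (inr p) (inr p') /\ prel b (inl q) (inl q')).
  { destruct v as [x|d]; simpl in *.
    - assert (Ha : prel a (inr p) (inr p')).
      { apply prel_trans with (inl x); auto. apply prel_sym; auto. }
      split; auto.
      apply prel_trans with (inl p'). apply L1; auto.
      apply prel_sym, L2, prel_refl.
    - assert (Hq : prel b (inl q) (inl q')).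
      { apply prel_trans with (inr d); auto. apply prel_sym; auto. }
      split; auto. apply L1.
      apply prel_trans with (inl q'); auto. apply L2, prel_refl. }
  destruct Hb as [Ha Hq].
  intros [x|d]; simpl; intro H.
  - apply prel_trans with (inr p'); auto.
  - apply prel_trans with (inl q'); auto.
Qed.

Lemma prod_refl u : prod_rel u u.
Proof. left; reflexivity. Qed.

Lemma prod_sym u v : prod_rel u v -> prod_rel v u.
Proof.
  intros [->|[p [q [L [H1 H2]]]]]; [left; reflexivity|].
  right; exists p, q; auto.
Qed.

Lemma prod_trans u v w : prod_rel u v -> prod_rel v w -> prod_rel u w.
Proof.
  intros [->|[p [q [L [H1 H2]]]]]; auto.
  intros [<-|[p' [q' [L' [H3 H4]]]]].
  - right; exists p, q; auto.
  - right; exists p, q; split; [exact L|split; [exact H1|]].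
    apply (pin_transfer p q p' q' v); auto.
Qed.

Lemma prod_block u v : prod_rel u v -> u <> v ->
  (exists x, prod_rel u (inl x)) /\ (exists y, prod_rel u (inr y)).
Proof.
  intros [->|[p [q [L [H1 H2]]]]] Hne; [congruence|].
  destruct L as [L0 [[x Hx] [d Hd]]].
  split.
  - exists x; right; exists p, q; split; [split; [exact L0|split; eauto]|split; auto].
  - exists d; right; exists p, q; split; [split; [exact L0|split; eauto]|split; auto].
Qed.

End Product.

Definition pcomp {X : Type} (a b : PI X) : PI X :=
  mkPI X (prod_rel X a b) (prod_refl X a b) (prod_sym X a b)
       (prod_trans X a b) (prod_block X a b).

Definition is_bijection {A B : Type} (f : A -> B) : Prop :=
  exists g : B -> A, (forall x, g (f x) = x) /\ (forall y, f (g y) = y).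

Definition is_automorphism {X : Type} (phi : PI X -> PI X) : Prop :=
  is_bijection phi /\ forall a b, phi (pcomp a b) = pcomp (phi a) (phi b).

(* An element of the monoid is determined by its generalised lines, and the
   product composes lines A ∪ B' and B ∪ D' into A ∪ D'.  The idempotents
   ε_B whose only line is B ∪ B' are exactly the primitive idempotents
   (e ≠ 0, e e = e, e a e ∈ {0, e} for all a); for them, the existence of an
   a with ε_B a = ε_B and a ε_C = ε_C, ε_B ≠ ε_C, says that B ∩ C = ∅, and the
   ε_{x} are the atoms for this disjointness.  All of this is algebraic, so an
   automorphism permutes the ε_{x} along a bijection f of X and maps ε_B to
   ε_{f(B)}.  Since A ∪ D' is a line of a iff ε_A a ε_D ≠ 0, it then agrees
   with the relabelling of X ∪ X' by f. *)

From Stdlib Require Import Classical ClassicalEpsilon FunctionalExtensionality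
  PropExtensionality ProofIrrelevance.

Arguments prel_refl {X} p u.
Arguments prel_sym {X} p u v.
Arguments prel_trans {X} p u v w.
Arguments prel_block {X} p u v.

Section Lines.
Context {X : Type}.

Definition in_line (A B : X -> Prop) (u : X + X) : Prop :=
  match u with inl x => A x | inr y => B y end.

Definition is_line (a : PI X) (A B : X -> Prop) : Prop :=
  (exists x, A x) /\ (exists y, B y) /\
  exists u, forall t, prel a u t <-> in_line A B t.

Lemma pred_ext (A B : X -> Prop) : (forall x, A x <-> B x) -> A = B.
Proof. intro H; extensionality x; apply propositional_extensionality, H. Qed.

Lemma in_line_inj A B C D :
  (forall t, in_line A B t <-> in_line C D t) -> A = C /\ B = D.
Proof. intro H; split; apply pred_ext; intro x; [exact (H (inl x)) | exact (H (inr x))]. Qed.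

Lemma PI_eq (a b : PI X) : (forall u v, prel a u v <-> prel b u v) -> a = b.
Proof.
  destruct a as [r ra sa ta ba], b as [s rb sb tb bb]; simpl; intro H.
  assert (r = s) as <-.
  { extensionality u; extensionality v; apply propositional_extensionality, H. }
  f_equal; apply proof_irrelevance.
Qed.

Lemma is_line_block a A B t :
  is_line a A B -> in_line A B t -> forall s, prel a t s <-> in_line A B s.
Proof.
  intros [_ [_ [u Hu]]] Ht s; rewrite <- Hu; split; intro H.
  - apply prel_trans with t; [apply Hu|]; assumption.
  - apply prel_trans with u; [apply prel_sym, Hu|]; assumption.
Qed.

Lemma is_line_unique a A B C D t :
  is_line a A B -> is_line a C D -> in_line A B t -> in_line C D t -> A = C /\ B = D.
Proof.
  intros HAB HCD Ht Ht'; apply in_line_inj; intro s.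
  rewrite <- (is_line_block a A B t), <- (is_line_block a C D t); tauto.
Qed.

Lemma is_line_of_prel a u v : prel a u v -> u <> v ->
  is_line a (fun x => prel a u (inl x)) (fun y => prel a u (inr y)).
Proof.
  intros Huv Hne; destruct (prel_block a u v Huv Hne) as [HA HB].
  split; [exact HA | split; [exact HB|]].
  exists u; intros [x|y]; reflexivity.
Qed.

Lemma prel_of_lines_incl (a b : PI X) :
  (forall A B, is_line a A B -> is_line b A B) -> forall u v, prel a u v -> prel b u v.
Proof.
  intros H u v Huv.
  destruct (classic (u = v)) as [<-|Hne]; [apply prel_refl|].
  apply (is_line_block _ _ _ u (H _ _ (is_line_of_prel a u v Huv Hne))).
  - destruct u; apply prel_refl.
  - destruct v; exact Huv.
Qed.

Lemma PI_ext_lines (a b : PI X) :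
  (forall A B, is_line a A B <-> is_line b A B) -> a = b.
Proof.
  intro H; apply PI_eq; intros u v; split; apply prel_of_lines_incl; intros A B; apply H.
Qed.

Lemma pcomp_block (a b : PI X) p q v w :
  plink X a b p q -> pin X a b p q v -> (prel (pcomp a b) v w <-> pin X a b p q w).
Proof.
  intros L Hv; split.
  - intros [<-|[p' [q' [L' [H1 H2]]]]]; [exact Hv|].
    exact (pin_transfer X a b p q p' q' v L L' Hv H1 w H2).
  - intro Hw; right; exists p, q; auto.
Qed.

Lemma is_line_pcomp (a b : PI X) A D :
  is_line (pcomp a b) A D <-> exists B, is_line a A B /\ is_line b B D.
Proof.
  split.
  - intros HAD; pose proof HAD as [[x Ax] [[d Dd] _]].
    assert (Hxd : prel (pcomp a b) (inl x) (inr d))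
      by (apply (is_line_block _ A D); assumption).
    destruct Hxd as [E|[p [q [L [Px Pd]]]]]; [discriminate|].
    assert (Hblk : forall t, in_line A D t <-> pin X a b p q t).
    { intro t; rewrite <- (is_line_block _ A D (inl x) HAD Ax), (pcomp_block a b p q); tauto. }
    destruct L as [Lpq _].
    exists (fun y => prel a (inr p) (inr y)); split.
    + split; [exists x; exact Ax | split; [exists p; apply prel_refl|]].
      exists (inr p); intros [z|z]; [symmetry; exact (Hblk (inl z)) | reflexivity].
    + split; [exists p; apply prel_refl | split; [exists d; exact Dd|]].
      exists (inl q); intros [z|z]; [symmetry; apply Lpq | symmetry; exact (Hblk (inr z))].
  - intros [B [HAB HBD]].
    pose proof HAB as [[x Ax] [[y By] _]]; pose proof HBD as [_ [[d Dd] _]].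
    assert (Ha := is_line_block a A B (inr y) HAB By).
    assert (Hb := is_line_block b B D (inl y) HBD By).
    assert (L : plink X a b y y).
    { split; [intro z; rewrite (Ha (inr z)), (Hb (inl z)); reflexivity|].
      split; [exists x; apply Ha, Ax | exists d; apply Hb, Dd]. }
    split; [exists x; exact Ax | split; [exists d; exact Dd|]].
    exists (inl x); intro t; rewrite (pcomp_block a b y y (inl x) t L (proj2 (Ha (inl x)) Ax)).
    destruct t as [z|z]; [apply (Ha (inl z)) | apply (Hb (inr z))].
Qed.

End Lines.

Section OfPer.
Context {X : Type} (R : X + X -> X + X -> Prop)
  (R_sym : forall u v, R u v -> R v u)
  (R_trans : forall u v w, R u v -> R v w -> R u w).

Definition meets_both_sides (u : X + X) : Prop :=
  (exists x, R u (inl x)) /\ (exists y, R u (inr y)).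

Definition per_rel (u v : X + X) : Prop := u = v \/ (R u v /\ meets_both_sides u).

Lemma per_rel_refl u : per_rel u u.
Proof. left; reflexivity. Qed.

Lemma per_rel_sym u v : per_rel u v -> per_rel v u.
Proof.
  intros [<-|[Huv [[x Hx] [y Hy]]]]; [left; reflexivity|].
  right; split; [apply R_sym, Huv|].
  split; [exists x | exists y]; apply R_trans with u; auto.
Qed.

Lemma per_rel_trans u v w : per_rel u v -> per_rel v w -> per_rel u w.
Proof.
  intros [<-|[Huv Hu]]; [tauto|].
  intros [<-|[Hvw _]]; right; [|split; [apply R_trans with v|]]; auto.
Qed.

Lemma per_rel_block u v : per_rel u v -> u <> v ->
  (exists x, per_rel u (inl x)) /\ (exists y, per_rel u (inr y)).
Proof.
  intros [E|[_ Hu]] Hne; [contradiction|].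
  pose proof Hu as [[x Hx] [y Hy]].
  split; [exists x | exists y]; right; auto.
Qed.

Definition of_per : PI X :=
  mkPI X per_rel per_rel_refl per_rel_sym per_rel_trans per_rel_block.

Lemma is_line_of_per A B :
  is_line of_per A B <->
  exists u, meets_both_sides u /\ forall t, R u t <-> in_line A B t.
Proof.
  assert (Hself : forall u, meets_both_sides u -> R u u).
  { intros u [[x Hx] _]; apply R_trans with (inl x); auto. }
  split.
  - intros [[x Ax] [[y By] [u Hu]]]; simpl in Hu.
    assert (Hu_on : meets_both_sides u).
    { destruct (proj2 (Hu (inl x)) Ax) as [Ex|[_ H]]; [|exact H].
      destruct (proj2 (Hu (inr y)) By) as [Ey|[_ H]]; [congruence | exact H]. }
    exists u; split; [exact Hu_on|].
    intro t; rewrite <- Hu; unfold per_rel.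
    split; [tauto | intros [<-|[H _]]; auto].
  - intros [u [Hu_on Hu]]; pose proof Hu_on as [[x Hx] [y Hy]].
    split; [exists x; apply (Hu (inl x)), Hx | split; [exists y; apply (Hu (inr y)), Hy|]].
    exists u; intro t; simpl; unfold per_rel; rewrite <- Hu.
    split; [intros [<-|[H _]]; auto | tauto].
Qed.

End OfPer.

Definition side_value {X : Type} (u : X + X) : X :=
  match u with inl x | inr x => x end.

Section Diagonal.
Context {X : Type} (E : X -> X -> Prop)
  (E_sym : forall x y, E x y -> E y x)
  (E_trans : forall x y z, E x y -> E y z -> E x z).

Definition diag : PI X :=
  of_per (fun u v => E (side_value u) (side_value v))
    (fun u v => E_sym _ _) (fun u v w => E_trans _ _ _).

Lemma is_line_diag A B :
  is_line diag A B <-> exists x, E x x /\ A = E x /\ B = E x.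
Proof.
  unfold diag; rewrite is_line_of_per; split.
  - intros [u [[[x Hx] _] Hu]].
    exists (side_value u); split; [apply E_trans with x; auto|].
    split; apply pred_ext; intro z; symmetry; [exact (Hu (inl z)) | exact (Hu (inr z))].
  - intros [x [Hx [-> ->]]].
    exists (inl x); split; [split; exists x; exact Hx|].
    intros [z|z]; reflexivity.
Qed.

End Diagonal.

Section LineIdempotents.
Context {X : Type}.

Definition line_idem (B : X -> Prop) : PI X :=
  diag (fun x y => B x /\ B y) (fun x y H => conj (proj2 H) (proj1 H))
    (fun x y z H1 H2 => conj (proj1 H1) (proj2 H2)).

(* The partition of X ∪ X' into points; it is the zero of the monoid. *)
Definition zero : PI X := line_idem (fun _ => False).

Definition point (x : X) : PI X := line_idem (eq x).

Lemma is_line_line_idem B C D :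
  is_line (line_idem B) C D <-> (exists x, B x) /\ C = B /\ D = B.
Proof.
  unfold line_idem; rewrite is_line_diag; split.
  - intros [x [[Bx _] [-> ->]]].
    assert (HB : (fun y => B x /\ B y) = B) by (apply pred_ext; tauto).
    rewrite HB; eauto.
  - intros [[x Bx] [-> ->]]; exists x; split; [auto|].
    split; apply pred_ext; tauto.
Qed.

Lemma is_line_zero A B : ~ is_line zero A B.
Proof. intros H; apply is_line_line_idem in H; destruct H as [[x []] _]. Qed.

Lemma line_idem_inj B C : (exists x, B x) -> line_idem B = line_idem C -> B = C.
Proof.
  intros HB E.
  assert (H : is_line (line_idem B) B B) by (apply is_line_line_idem; auto).
  rewrite E in H; apply is_line_line_idem in H; apply H.
Qed.

Lemma point_inj x y : point x = point y -> x = y.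
Proof.
  intro E; apply line_idem_inj in E; [|exists x; reflexivity].
  rewrite E; reflexivity.
Qed.

Lemma line_idem_empty B : ~ (exists x, B x) -> line_idem B = zero.
Proof.
  intro HB; apply PI_ext_lines; intros C D; split; intro H.
  - apply is_line_line_idem in H; tauto.
  - exfalso; exact (is_line_zero C D H).
Qed.

Lemma nonzero_has_line (a : PI X) : a <> zero -> exists A B, is_line a A B.
Proof.
  intro H; apply NNPP; intro N; apply H, PI_ext_lines; intros A B; split; intro HL.
  - exfalso; eauto.
  - exfalso; exact (is_line_zero A B HL).
Qed.

Lemma is_line_pcomp_line_idem_l B (a : PI X) C D :
  is_line (pcomp (line_idem B) a) C D <-> C = B /\ is_line a B D.
Proof.
  rewrite is_line_pcomp; split.
  - intros [M [HL Ha]]; apply is_line_line_idem in HL.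
    destruct HL as [_ [-> ->]]; auto.
  - intros [-> Ha]; exists B; split; [apply is_line_line_idem|]; auto.
    split; [apply Ha | auto].
Qed.

Lemma is_line_pcomp_line_idem_r (a : PI X) B C D :
  is_line (pcomp a (line_idem B)) C D <-> D = B /\ is_line a C B.
Proof.
  rewrite is_line_pcomp; split.
  - intros [M [Ha HL]]; apply is_line_line_idem in HL.
    destruct HL as [_ [-> ->]]; auto.
  - intros [-> Ha]; exists B; split; [|apply is_line_line_idem]; auto.
    split; [apply Ha | auto].
Qed.

Definition sandwich (A : X -> Prop) (a : PI X) (D : X -> Prop) : PI X :=
  pcomp (pcomp (line_idem A) a) (line_idem D).

Lemma is_line_sandwich A a D C F :
  is_line (sandwich A a D) C F <-> C = A /\ F = D /\ is_line a A D.
Proof.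
  unfold sandwich; rewrite is_line_pcomp_line_idem_r, is_line_pcomp_line_idem_l; tauto.
Qed.

Lemma is_line_iff_sandwich_nonzero (a : PI X) A D :
  is_line a A D <-> sandwich A a D <> zero.
Proof.
  split.
  - intros H E; apply (is_line_zero A D); rewrite <- E; apply is_line_sandwich; auto.
  - intro H; destruct (nonzero_has_line _ H) as [C [F HL]].
    apply is_line_sandwich in HL; tauto.
Qed.

Lemma pcomp_zero_l (a : PI X) : pcomp zero a = zero.
Proof.
  apply PI_ext_lines; intros A D; rewrite is_line_pcomp; split.
  - intros [B [H _]]; exfalso; exact (is_line_zero _ _ H).
  - intro H; exfalso; exact (is_line_zero _ _ H).
Qed.

Lemma pcomp_zero_r (a : PI X) : pcomp a zero = zero.
Proof.
  apply PI_ext_lines; intros A D; rewrite is_line_pcomp; split.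
  - intros [B [_ H]]; exfalso; exact (is_line_zero _ _ H).
  - intro H; exfalso; exact (is_line_zero _ _ H).
Qed.

End LineIdempotents.

Section PrimitiveIdempotents.
Context {X : Type}.

Definition primitive (e : PI X) : Prop :=
  e <> zero /\ pcomp e e = e /\
  forall a, pcomp (pcomp e a) e = zero \/ pcomp (pcomp e a) e = e.

Lemma idempotent_line_diag (e : PI X) A B : pcomp e e = e -> is_line e A B -> A = B.
Proof.
  intros He HAB; pose proof HAB as [[x Ax] [[y By] _]].
  pose proof HAB as HAB2; rewrite <- He, is_line_pcomp in HAB2.
  destruct HAB2 as [M [HAM HMB]].
  destruct (is_line_unique e A M A B (inl x) HAM HAB Ax Ax) as [_ ->].
  destruct (is_line_unique e B B A B (inr y) HMB HAB By By) as [E _].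
  symmetry; exact E.
Qed.

Lemma primitive_line_idem B : (exists x, B x) -> primitive (line_idem B).
Proof.
  intro HB; split; [|split].
  - intro E; apply (is_line_zero B B); rewrite <- E; apply is_line_line_idem; auto.
  - apply PI_ext_lines; intros C D.
    rewrite is_line_pcomp_line_idem_l, !is_line_line_idem; intuition.
  - intro a; fold (sandwich B a B).
    destruct (classic (is_line a B B)) as [H|H]; [right|left];
      apply PI_ext_lines; intros C D; rewrite is_line_sandwich.
    + rewrite is_line_line_idem; intuition.
    + split; [tauto | intro K; exfalso; exact (is_line_zero _ _ K)].
Qed.

Lemma primitive_is_line_idem e :
  primitive e -> exists B, (exists x, B x) /\ e = line_idem B.
Proof.
  intros [Hnz [Hid Hprim]].
  destruct (nonzero_has_line e Hnz) as [A [B HAB]].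
  rewrite <- (idempotent_line_diag e A B Hid HAB) in HAB.
  assert (Hlines : forall C D, is_line (pcomp (pcomp e (line_idem A)) e) C D <->
                               is_line e C A /\ is_line e A D).
  { intros C D; rewrite is_line_pcomp; split.
    - intros [M [HCM HMD]]; apply is_line_pcomp_line_idem_r in HCM.
      destruct HCM as [-> HCA]; auto.
    - intros [HCA HAD]; exists A; rewrite is_line_pcomp_line_idem_r; auto. }
  assert (HeAe : pcomp (pcomp e (line_idem A)) e = e).
  { destruct (Hprim (line_idem A)) as [E|E]; [|exact E].
    exfalso; apply (is_line_zero A A); rewrite <- E; apply Hlines; auto. }
  exists A; split; [apply HAB|].
  apply PI_ext_lines; intros C D; rewrite is_line_line_idem; split.
  - intro H; rewrite <- HeAe, Hlines in H; destruct H as [HCA HAD].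
    split; [apply HAB|].
    split; [|symmetry]; apply (idempotent_line_diag e); assumption.
  - intros [_ [-> ->]]; exact HAB.
Qed.

(* For [e1 = line_idem B] and [e2 = line_idem C], a witness [a] must have both
   B ∪ B' and C ∪ C' as blocks, which is possible iff B = C or B ∩ C = ∅. *)
Definition disjoint (e1 e2 : PI X) : Prop :=
  e1 <> e2 /\ exists a, pcomp e1 a = e1 /\ pcomp a e2 = e2.

Definition two_lines (B C : X -> Prop) (Hd : forall x, B x -> C x -> False) : PI X.
Proof.
  refine (diag (fun x y => (B x /\ B y) \/ (C x /\ C y)) _ _); firstorder.
Defined.

Lemma is_line_two_lines B C Hd E F :
  is_line (two_lines B C Hd) E F <->
  ((exists x, B x) /\ E = B /\ F = B) \/ ((exists x, C x) /\ E = C /\ F = C).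
Proof.
  unfold two_lines; rewrite is_line_diag; split.
  - intros [x [[[Bx _]|[Cx _]] [-> ->]]]; [left|right]; split; eauto;
      split; apply pred_ext; firstorder.
  - intros [[[x Bx] [-> ->]]|[[x Cx] [-> ->]]]; exists x;
      (split; [tauto | split; apply pred_ext; firstorder]).
Qed.

Lemma disjoint_line_idem B C : (exists x, B x) -> (exists x, C x) ->
  disjoint (line_idem B) (line_idem C) <-> (forall x, B x -> C x -> False).
Proof.
  intros HB HC; split.
  - intros [Hne [a [H1 H2]]] x Bx Cx; apply Hne.
    assert (HaB : is_line a B B).
    { assert (K : is_line (line_idem B) B B) by (apply is_line_line_idem; auto).
      rewrite <- H1, is_line_pcomp_line_idem_l in K; apply K. }
    assert (HaC : is_line a C C).
    { assert (K : is_line (line_idem C) C C) by (apply is_line_line_idem; auto).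
      rewrite <- H2, is_line_pcomp_line_idem_r in K; apply K. }
    destruct (is_line_unique a B B C C (inl x) HaB HaC Bx Cx) as [-> _]; reflexivity.
  - intro Hd.
    assert (HBC : B <> C) by (intros <-; destruct HB as [x Bx]; exact (Hd x Bx Bx)).
    split; [intro E; exact (HBC (line_idem_inj B C HB E))|].
    exists (two_lines B C Hd); split; apply PI_ext_lines; intros E F.
    + rewrite is_line_pcomp_line_idem_l, is_line_two_lines, is_line_line_idem.
      intuition congruence.
    + rewrite is_line_pcomp_line_idem_r, is_line_two_lines, is_line_line_idem.
      intuition congruence.
Qed.

Lemma not_disjoint_line_idem B C : (exists x, B x) -> (exists x, C x) ->
  ~ disjoint (line_idem B) (line_idem C) <-> exists x, B x /\ C x.
Proof.
  intros HB HC; rewrite disjoint_line_idem by assumption.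
  split; [intro H; apply NNPP; firstorder | firstorder].
Qed.

Definition atom (e : PI X) : Prop :=
  primitive e /\ forall e1 e2, primitive e1 -> primitive e2 ->
    ~ disjoint e e1 -> ~ disjoint e e2 -> ~ disjoint e1 e2.

Lemma not_disjoint_point B x : (exists y, B y) ->
  ~ disjoint (point x) (line_idem B) <-> B x.
Proof.
  intro HB; unfold point; rewrite not_disjoint_line_idem by eauto.
  split; [intros [y [<- Bx]]; exact Bx | eauto].
Qed.

Lemma atom_point x : atom (point x).
Proof.
  split; [apply primitive_line_idem; exists x; reflexivity|].
  intros e1 e2 P1 P2 H1 H2.
  destruct (primitive_is_line_idem e1 P1) as [C [HC ->]].
  destruct (primitive_is_line_idem e2 P2) as [D [HD ->]].
  rewrite not_disjoint_point in H1, H2 by assumption.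
  rewrite not_disjoint_line_idem by assumption; eauto.
Qed.

Lemma atom_is_point e : atom e -> exists x, e = point x.
Proof.
  intros [Pe Hat]; destruct (primitive_is_line_idem e Pe) as [B [[x Bx] ->]].
  exists x; unfold point; f_equal; apply pred_ext; intro z; split; [|intros <-; exact Bx].
  intro Bz.
  assert (Hmeet : forall y, B y -> ~ disjoint (line_idem B) (point y)).
  { intros y By; unfold point; rewrite not_disjoint_line_idem by eauto; eauto. }
  assert (K := Hat (point x) (point z) (proj1 (atom_point x)) (proj1 (atom_point z))
                   (Hmeet x Bx) (Hmeet z Bz)).
  symmetry; exact (proj1 (not_disjoint_point (eq z) x (ex_intro _ z eq_refl)) K).
Qed.

End PrimitiveIdempotents.

Section Automorphisms.
Context {X : Type}.

Record aut_pair (phi psi : PI X -> PI X) : Prop := {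
  aut_cancel : forall a, psi (phi a) = a;
  aut_cancel_inv : forall b, phi (psi b) = b;
  aut_pcomp : forall a b, phi (pcomp a b) = pcomp (phi a) (phi b) }.

Lemma aut_pair_sym phi psi : aut_pair phi psi -> aut_pair psi phi.
Proof.
  intros [K1 K2 M]; split; [exact K2 | exact K1|].
  intros a b; rewrite <- (K2 a) at 1; rewrite <- (K2 b) at 1; rewrite <- M; apply K1.
Qed.

Lemma aut_pair_of_automorphism phi : is_automorphism phi -> exists psi, aut_pair phi psi.
Proof. intros [[psi [K1 K2]] M]; exists psi; split; assumption. Qed.

Section Invariance.
Variables phi psi : PI X -> PI X.
Hypothesis Hphi : aut_pair phi psi.

Lemma aut_inj a b : phi a = phi b -> a = b.
Proof. intro E; rewrite <- (aut_cancel _ _ Hphi a), E; apply aut_cancel, Hphi. Qed.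

Lemma aut_zero : phi zero = zero.
Proof.
  transitivity (phi (pcomp zero (psi zero))); [rewrite pcomp_zero_l; reflexivity|].
  rewrite (aut_pcomp _ _ Hphi), (aut_cancel_inv _ _ Hphi); apply pcomp_zero_r.
Qed.

Lemma aut_primitive e : primitive e -> primitive (phi e).
Proof.
  intros [Hnz [Hid Hprim]]; split; [|split].
  - rewrite <- aut_zero; intro E; exact (Hnz (aut_inj _ _ E)).
  - rewrite <- (aut_pcomp _ _ Hphi), Hid; reflexivity.
  - intro a; rewrite <- (aut_cancel_inv _ _ Hphi a), <- !(aut_pcomp _ _ Hphi), <- aut_zero.
    destruct (Hprim (psi a)) as [E|E]; rewrite E; auto.
Qed.

Lemma aut_disjoint e1 e2 : disjoint e1 e2 -> disjoint (phi e1) (phi e2).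
Proof.
  intros [Hne [a [H1 H2]]]; split; [intro E; exact (Hne (aut_inj _ _ E))|].
  exists (phi a); rewrite <- !(aut_pcomp _ _ Hphi), H1, H2; auto.
Qed.

End Invariance.

Lemma aut_disjoint_iff phi psi e1 e2 :
  aut_pair phi psi -> disjoint (phi e1) (phi e2) <-> disjoint e1 e2.
Proof.
  intro H; split; [|apply aut_disjoint with psi, H].
  intro D; rewrite <- (aut_cancel _ _ H e1), <- (aut_cancel _ _ H e2).
  exact (aut_disjoint psi phi (aut_pair_sym _ _ H) _ _ D).
Qed.

Lemma aut_atom phi psi e : aut_pair phi psi -> atom e -> atom (phi e).
Proof.
  intros H [Pe Hat]; split; [exact (aut_primitive phi psi H e Pe)|].
  intros e1 e2 P1 P2 H1 H2.
  assert (Hpsi := aut_primitive psi phi (aut_pair_sym _ _ H)).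
  rewrite <- (aut_cancel_inv _ _ H e1) in H1 |- *.
  rewrite <- (aut_cancel_inv _ _ H e2) in H2 |- *.
  rewrite aut_disjoint_iff in H1, H2 |- * by exact H.
  apply Hat; auto.
Qed.

Lemma aut_point phi psi : aut_pair phi psi -> forall x, exists y, phi (point x) = point y.
Proof. intros H x; apply atom_is_point, (aut_atom phi psi), atom_point; exact H. Qed.

Lemma aut_line_idem phi psi f h :
  aut_pair phi psi -> (forall x, phi (point x) = point (f x)) -> (forall y, f (h y) = y) ->
  forall B, phi (line_idem (fun x => B (f x))) = line_idem B.
Proof.
  intros H Hf fh B.
  destruct (classic (exists y, B y)) as [[y By]|HB].
  2: { assert (HBf : ~ exists x, B (f x)) by (intros [x Bx]; eauto).
       rewrite (line_idem_empty _ HBf), (line_idem_empty _ HB); exact (aut_zero phi psi H). }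
  assert (HBf : exists x, B (f x)) by (exists (h y); rewrite fh; exact By).
  destruct (primitive_is_line_idem _ (aut_primitive phi psi H _ (primitive_line_idem _ HBf)))
    as [C [HC E]].
  rewrite E; f_equal; apply pred_ext; intro z.
  rewrite <- (not_disjoint_point C z HC), <- (fh z), <- Hf, <- E, aut_disjoint_iff by exact H.
  exact (not_disjoint_point (fun x => B (f x)) (h z) HBf).
Qed.

Lemma aut_lines phi psi f :
  aut_pair phi psi -> (forall B, phi (line_idem (fun x => B (f x))) = line_idem B) ->
  forall a A D, is_line (phi a) A D <-> is_line a (fun x => A (f x)) (fun x => D (f x)).
Proof.
  intros H Hf a A D; rewrite !is_line_iff_sandwich_nonzero; unfold sandwich.
  rewrite <- (Hf A), <- (Hf D), <- !(aut_pcomp _ _ H), <- (aut_zero phi psi H) at 1.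
  split; intros N E; apply N; [rewrite E; reflexivity | exact (aut_inj phi psi H _ _ E)].
Qed.

End Automorphisms.

Section InducedAutomorphisms.
Context {X : Type}.

Definition smap (g : X -> X) (u : X + X) : X + X :=
  match u with inl x => inl (g x) | inr y => inr (g y) end.

Lemma smap_cancel f g u : (forall x, f (g x) = x) -> smap f (smap g u) = u.
Proof. intro fg; destruct u; simpl; rewrite fg; reflexivity. Qed.

(* For bijective [g] this is the image of [a] under the inverse of [g]. *)
Definition relabel (g : X -> X) (a : PI X) : PI X :=
  of_per (fun u v => prel a (smap g u) (smap g v))
    (fun u v => prel_sym a _ _) (fun u v w => prel_trans a _ _ _).

Lemma is_line_relabel f g a A B :
  (forall x, f (g x) = x) -> (forall x, g (f x) = x) ->
  is_line (relabel g a) A B <-> is_line a (fun x => A (f x)) (fun y => B (f y)).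
Proof.
  intros fg gf; unfold relabel; rewrite is_line_of_per.
  assert (Hin : forall t, in_line (fun x => A (f x)) (fun y => B (f y)) t <->
                          in_line A B (smap f t)) by (intros [z|z]; reflexivity).
  split.
  - intros [u [[[x Hx] [y Hy]] Hu]].
    split; [exists (g x); rewrite fg; apply (Hu (inl x)), Hx|].
    split; [exists (g y); rewrite fg; apply (Hu (inr y)), Hy|].
    exists (smap g u); intro t; rewrite Hin, <- Hu, smap_cancel; tauto.
  - intros [[x Ax] [[y By] [w Hw]]].
    assert (Hw' : forall t, prel a (smap g (smap f w)) (smap g t) <-> in_line A B t).
    { intro t; rewrite smap_cancel, Hw, Hin, smap_cancel by assumption; reflexivity. }
    exists (smap f w); split; [|exact Hw'].
    split; [exists (f x); apply (Hw' (inl (f x))), Ax |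
            exists (f y); apply (Hw' (inr (f y))), By].
Qed.

Definition inverse (f : X -> X) (y : X) : X := epsilon (inhabits y) (fun x => f x = y).

Lemma inverse_spec f :
  is_bijection f -> (forall y, f (inverse f y) = y) /\ (forall x, inverse f (f x) = x).
Proof.
  intros [g [gf fg]].
  assert (Hr : forall y, f (inverse f y) = y)
    by (intro y; apply (epsilon_spec (inhabits y) (fun x => f x = y)); exists (g y); apply fg).
  split; [exact Hr|].
  intro x; rewrite <- (gf (inverse f (f x))), Hr; apply gf.
Qed.

(* Junk for a non-bijective [f]. *)
Definition induced_aut (f : X -> X) : PI X -> PI X := relabel (inverse f).

Lemma is_line_induced_aut f a A B : is_bijection f ->
  is_line (induced_aut f a) A B <-> is_line a (fun x => A (f x)) (fun y => B (f y)).
Proof. intro Hf; destruct (inverse_spec f Hf); apply is_line_relabel; assumption. Qed.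

Lemma is_bijection_comp (f g : X -> X) :
  is_bijection f -> is_bijection g -> is_bijection (fun x => f (g x)).
Proof.
  intros [f' [F1 F2]] [g' [G1 G2]]; exists (fun y => g' (f' y)).
  split; intro; rewrite ?F1, ?G1, ?G2, ?F2; reflexivity.
Qed.

Lemma induced_aut_comp f g a : is_bijection f -> is_bijection g ->
  induced_aut (fun x => f (g x)) a = induced_aut f (induced_aut g a).
Proof.
  intros Hf Hg; apply PI_ext_lines; intros A B.
  rewrite !is_line_induced_aut by auto using is_bijection_comp; reflexivity.
Qed.

Lemma induced_aut_id a : induced_aut (fun x : X => x) a = a.
Proof.
  apply PI_ext_lines; intros A B.
  rewrite is_line_induced_aut by (exists (fun x => x); auto); reflexivity.
Qed.

Lemma induced_aut_pcomp f a b : is_bijection f ->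
  induced_aut f (pcomp a b) = pcomp (induced_aut f a) (induced_aut f b).
Proof.
  intro Hf; pose proof Hf as [g [gf fg]].
  apply PI_ext_lines; intros A D; rewrite is_line_induced_aut, !is_line_pcomp by exact Hf.
  split.
  - intros [B [HAB HBD]]; exists (fun y => B (g y)).
    rewrite !is_line_induced_aut by exact Hf; cbv beta.
    assert (EB : (fun x => B (g (f x))) = B) by (extensionality x; rewrite gf; reflexivity).
    rewrite EB; auto.
  - intros [B [HAB HBD]]; rewrite is_line_induced_aut in HAB, HBD by exact Hf; eauto.
Qed.

Lemma is_automorphism_induced_aut f : is_bijection f -> is_automorphism (induced_aut f).
Proof.
  intro Hf; pose proof Hf as [g [gf fg]].
  assert (Hg : is_bijection g) by (exists f; auto).
  split; [|intros; apply induced_aut_pcomp, Hf].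
  exists (induced_aut g); split; intro a; rewrite <- induced_aut_comp by assumption.
  - assert (E : (fun x => g (f x)) = (fun x => x)) by (extensionality x; apply gf).
    rewrite E; apply induced_aut_id.
  - assert (E : (fun x => f (g x)) = (fun x => x)) by (extensionality x; apply fg).
    rewrite E; apply induced_aut_id.
Qed.

Lemma precomp_inj (f g : X -> X) (A B : X -> Prop) :
  (forall y, f (g y) = y) -> (fun x => A (f x)) = (fun x => B (f x)) -> A = B.
Proof. intros fg E; extensionality y; rewrite <- (fg y); exact (equal_f E (g y)). Qed.

Lemma induced_aut_line_idem f B : is_bijection f ->
  induced_aut f (line_idem (fun x => B (f x))) = line_idem B.
Proof.
  intro Hf; pose proof Hf as [g [gf fg]].
  apply PI_ext_lines; intros C D; rewrite is_line_induced_aut, !is_line_line_idem by exact Hf.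
  split.
  - intros [[x Bx] [EC ED]]; split; [eauto|].
    split; eapply precomp_inj; eassumption.
  - intros [[y By] [-> ->]]; split; [exists (g y); rewrite fg; exact By | auto].
Qed.

Lemma induced_aut_point f x : is_bijection f -> induced_aut f (point x) = point (f x).
Proof.
  intro Hf; pose proof Hf as [g [gf fg]].
  unfold point; rewrite <- (induced_aut_line_idem f (eq (f x)) Hf).
  do 2 f_equal; apply pred_ext; intro z.
  split; [intros ->; reflexivity | intro E; rewrite <- (gf x), E, gf; reflexivity].
Qed.

Lemma automorphism_is_induced phi :
  is_automorphism phi -> exists f, is_bijection f /\ induced_aut f = phi.
Proof.
  intro Hphi; destruct (aut_pair_of_automorphism phi Hphi) as [psi H].
  destruct (choice _ (aut_point phi psi H)) as [f Hf].
  destruct (choice _ (aut_point psi phi (aut_pair_sym _ _ H))) as [h Hh].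
  assert (fh : forall y, f (h y) = y).
  { intro y; apply point_inj; rewrite <- Hf, <- Hh; apply (aut_cancel_inv _ _ H). }
  assert (hf : forall x, h (f x) = x).
  { intro x; apply point_inj; rewrite <- Hh, <- Hf; apply (aut_cancel _ _ H). }
  assert (Hbij : is_bijection f) by (exists h; auto).
  exists f; split; [exact Hbij|].
  extensionality a; apply PI_ext_lines; intros A D.
  rewrite is_line_induced_aut by exact Hbij.
  symmetry; exact (aut_lines phi psi f H (aut_line_idem phi psi f h H Hf fh) a A D).
Qed.

End InducedAutomorphisms.

Theorem mainTheorem16 (X : Type) :
  exists Phi : (X -> X) -> (PI X -> PI X),
    (forall f, is_bijection f -> is_automorphism (Phi f)) /\
    (forall f g, is_bijection f -> is_bijection g ->
       Phi (fun x => f (g x)) = (fun a => Phi f (Phi g a))) /\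
    (forall f g, is_bijection f -> is_bijection g -> Phi f = Phi g -> f = g) /\
    (forall phi, is_automorphism phi -> exists f, is_bijection f /\ Phi f = phi).
Proof.
  exists induced_aut; split; [exact is_automorphism_induced_aut|].
  split; [intros f g Hf Hg; extensionality a; apply induced_aut_comp; assumption|].
  split; [|exact automorphism_is_induced].
  intros f g Hf Hg E; extensionality x; apply point_inj.
  rewrite <- (induced_aut_point f x Hf), <- (induced_aut_point g x Hg), E; reflexivity.
Qed.
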